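(* The following six elements of $\Delta$ are all equal: \begin{gather*} qABC + q^2A^2+q^{-2}B^2+q^2C^2-q A\alpha -q^{-1} B\beta -q C\gamma,\\ qBCA + q^2A^2 + q^2B^2+q^{-2}C^2 -q A\alpha -qB\beta -q^{-1}C\gamma,\\ qCAB + q^{-2}A^2+q^2B^2 +q^2 C^2 -q^{-1} A\alpha -q B \beta -q C\gamma,\\ q^{-1}CBA + q^{-2}A^2+q^{2}B^2+q^{-2}C^2-q^{-1}A\alpha -q B\beta - q^{-1} C\gamma,\\ q^{-1}ACB + q^{-2}A^2 + q^{-2}B^2+q^{2}C^2 -q^{-1} A\alpha -q^{-1}B\beta -q C\gamma,\\ q^{-1}BAC + q^{2}A^2+q^{-2}B^2 +q^{-2}C^2 -q A\alpha -q^{-1} B \beta -q^{-1} C\gamma. \end{gather*}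
   Context: Let $\mathbb F$ be a field and fix a nonzero $q\in\mathbb F$ with $q^4\neq 1$. The universal Askey--Wilson algebra $\Delta$ is the associative $\mathbb F$-algebra with 1 with generators $A,B,C$ subject to the relations that each of $A+\frac{qBC-q^{-1}CB}{q^2-q^{-2}}$, $B+\frac{qCA-q^{-1}AC}{q^2-q^{-2}}$, $C+\frac{qAB-q^{-1}BA}{q^2-q^{-2}}$ is central; $\alpha,\beta,\gamma$ denote these three central elements (in order) each multiplied by $q+q^{-1}$. *)

From HB Require Import structures.
From mathcomp Require Import all_boot all_order all_algebra.
Set Implicit Arguments. Unset Strict Implicit. Unset Printing Implicit Defensive.
Import GRing.Theory.
Local Open Scope ring_scope.

(* The universal Askey--Wilson algebra is presented by generators A, B, C and the
   relations that the three elements below are central.  We work in an arbitrary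
   associative F-algebra V with 1 containing A, B, C satisfying these relations;
   identities valid in all such V are exactly the identities valid in Delta
   (Delta itself is such a V, and Delta maps to every such V). *)

Section AW.
Variables (F : fieldType) (V : algType F) (q : F).

Definition AWcen (X Y Z : V) : V :=
  X + (q ^+ 2 - q ^- 2)^-1 *: (q *: (Y * Z) - q^-1 *: (Z * Y)).

Definition AWalpha (A B C : V) : V := (q + q^-1) *: AWcen A B C.
Definition AWbeta  (A B C : V) : V := (q + q^-1) *: AWcen B C A.
Definition AWgamma (A B C : V) : V := (q + q^-1) *: AWcen C A B.

Definition AW_relations (A B C : V) : Prop :=
  (forall x : V, GRing.comm (AWcen A B C) x) /\
  (forall x : V, GRing.comm (AWcen B C A) x) /\
  (forall x : V, GRing.comm (AWcen C A B) x).
End AW.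

From mathcomp Require Import all_boot all_order all_algebra.
From mathcomp Require Import ring.
Set Implicit Arguments. Unset Strict Implicit. Unset Printing Implicit Defensive.
Import GRing.Theory.
Local Open Scope ring_scope.

(* Write [Y,Z]_q = qYZ - q^-1 ZY.  Since q and q^-1 are the two roots of
   t^2 - (q + q^-1) t + 1, for e in {q, q^-1} the pair of terms
   e^2 X^2 - e X(q + q^-1)(X + [Y,Z]_q/(q^2 - q^-2)) equals
   -X^2 - e/(q - q^-1) X[Y,Z]_q.  Hence changing the coefficient e of a letter
   from q^-1 to q amounts to adding X[Y,Z]_q to the cubic leading term, and
   after this normalisation the six elements differ only in their cubic parts.
   These agree because A commutes with [B,C]_q and C with [A,B]_q, which is
   what the centrality of alpha and gamma says. *)

Lemma addr3_subr3 (U : zmodType) (x u1 u2 u3 v1 v2 v3 : U) :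
  x + u1 + u2 + u3 - v1 - v2 - v3 = x + (u1 - v1) + (u2 - v2) + (u3 - v3).
Proof. by rewrite !addrA (addrAC _ u3 (- v1)) (addrAC _ u2 (- v1)) (addrAC _ u3 (- v2)). Qed.

Section AskeyWilsonCasimir.
Variables (F : fieldType) (V : algType F) (q : F).
Hypotheses (q_neq0 : q != 0) (q4_neq1 : q ^+ 4 != 1).

Lemma q2_neq1 : q ^+ 2 != 1.
Proof. by apply: contra q4_neq1 => /eqP q2; rewrite (exprM q 2 2) q2 expr1n. Qed.

Definition qcomm (Y Z : V) : V := q *: (Y * Z) - q^-1 *: (Z * Y).

Lemma mulr_qcomm (X Y Z : V) :
  X * qcomm Y Z = q *: (X * Y * Z) - q^-1 *: (X * Z * Y).
Proof. by rewrite mulrBr -!scalerAr !mulrA. Qed.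

Lemma mul_qcommr (X Y Z : V) :
  qcomm Y Z * X = q *: (Y * Z * X) - q^-1 *: (Z * Y * X).
Proof. by rewrite mulrBl -!scalerAl. Qed.

Lemma AWcen_comm_qcomm (X Y Z : V) :
  GRing.comm (AWcen q X Y Z) X -> X * qcomm Y Z = qcomm Y Z * X.
Proof.
have k_neq0 : (q ^+ 2 - q ^- 2)^-1 != 0.
  rewrite invr_eq0 subr_eq0; apply: contra q4_neq1 => /eqP q2V.
  by rewrite -(mulfV (expf_neq0 2 q_neq0)) -q2V -exprD.
rewrite /GRing.comm /AWcen mulrDl mulrDr -scalerAl -scalerAr => /addrI.
by move/(scalerI k_neq0).
Qed.

Lemma mul_AWcen (X Y Z : V) :
  X * ((q + q^-1) *: AWcen q X Y Z)
  = (q + q^-1) *: X ^+ 2 + (q - q^-1)^-1 *: (X * qcomm Y Z).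
Proof.
rewrite /AWcen -scalerAr mulrDr -scalerAr scalerDr scalerA expr2.
congr (_ + _ *: _).
by field; rewrite q_neq0 -expr2 -exprD !subr_eq0 q2_neq1 q4_neq1.
Qed.

Definition AWterm (e : F) (X Y Z : V) : V :=
  e ^+ 2 *: X ^+ 2 - e *: (X * ((q + q^-1) *: AWcen q X Y Z)).

(* Only the coefficient of X [Y,Z]_q moves, by (q - q^-1)/(q - q^-1) = 1. *)
Lemma AWtermV (X Y Z : V) :
  AWterm q^-1 X Y Z = AWterm q X Y Z + X * qcomm Y Z.
Proof.
rewrite /AWterm mul_AWcen !scalerDr !scalerA !opprD !addrA -!scalerBl -!addrA.
set P := X * qcomm Y Z; rewrite -{3}[P]scale1r -!scaleNr -scalerDl.
by congr (_ *: _ + _ *: _); field; rewrite ?q_neq0 -?expr2 ?subr_eq0 ?q2_neq1.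
Qed.

Lemma qcomm_lead_rotate (X Y Z : V) :
  Z * qcomm X Y = qcomm X Y * Z ->
  q *: (X * Y * Z) + Y * qcomm Z X = q *: (Y * Z * X) + Z * qcomm X Y.
Proof. by move=> ->; rewrite mulr_qcomm mul_qcommr addrCA. Qed.

Lemma qcomm_lead_reverse (X Y Z : V) :
  q^-1 *: (Z * Y * X) + Z * qcomm X Y = q *: (Z * X * Y).
Proof. by rewrite mulr_qcomm addrC subrK. Qed.

Section Triple.
Variables A B C : V.

Definition AWsum (eA eB eC : F) (T : V) : V :=
  T + AWterm eA A B C + AWterm eB B C A + AWterm eC C A B.

Lemma AWsumE (eA eB eC : F) (T : V) :
  T + eA ^+ 2 *: A ^+ 2 + eB ^+ 2 *: B ^+ 2 + eC ^+ 2 *: C ^+ 2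
  - eA *: (A * AWalpha q A B C) - eB *: (B * AWbeta q A B C)
  - eC *: (C * AWgamma q A B C) = AWsum eA eB eC T.
Proof. exact: addr3_subr3. Qed.

Lemma AWsum_flipA (eB eC : F) (T : V) :
  AWsum q^-1 eB eC T = AWsum q eB eC (T + A * qcomm B C).
Proof. by rewrite /AWsum AWtermV !addrA !(addrAC _ (A * qcomm B C)). Qed.

Lemma AWsum_flipB (eA eC : F) (T : V) :
  AWsum eA q^-1 eC T = AWsum eA q eC (T + B * qcomm C A).
Proof. by rewrite /AWsum AWtermV !addrA !(addrAC _ (B * qcomm C A)). Qed.

Lemma AWsum_flipC (eA eB : F) (T : V) :
  AWsum eA eB q^-1 T = AWsum eA eB q (T + C * qcomm A B).
Proof. by rewrite /AWsum AWtermV !addrA !(addrAC _ (C * qcomm A B)). Qed.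

End Triple.
End AskeyWilsonCasimir.

Theorem lemma6p1 (F : fieldType) (V : algType F) (q : F) (A B C : V) :
  q != 0 -> q ^+ 4 != 1 -> AW_relations q A B C ->
  let al := AWalpha q A B C in
  let be := AWbeta q A B C in
  let ga := AWgamma q A B C in
  let E1 := q *: (A * B * C) + q ^+ 2 *: (A ^+ 2) + q ^- 2 *: (B ^+ 2)
            + q ^+ 2 *: (C ^+ 2) - q *: (A * al) - q^-1 *: (B * be) - q *: (C * ga) in
  let E2 := q *: (B * C * A) + q ^+ 2 *: (A ^+ 2) + q ^+ 2 *: (B ^+ 2)
            + q ^- 2 *: (C ^+ 2) - q *: (A * al) - q *: (B * be) - q^-1 *: (C * ga) in
  let E3 := q *: (C * A * B) + q ^- 2 *: (A ^+ 2) + q ^+ 2 *: (B ^+ 2)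
            + q ^+ 2 *: (C ^+ 2) - q^-1 *: (A * al) - q *: (B * be) - q *: (C * ga) in
  let E4 := q^-1 *: (C * B * A) + q ^- 2 *: (A ^+ 2) + q ^+ 2 *: (B ^+ 2)
            + q ^- 2 *: (C ^+ 2) - q^-1 *: (A * al) - q *: (B * be) - q^-1 *: (C * ga) in
  let E5 := q^-1 *: (A * C * B) + q ^- 2 *: (A ^+ 2) + q ^- 2 *: (B ^+ 2)
            + q ^+ 2 *: (C ^+ 2) - q^-1 *: (A * al) - q^-1 *: (B * be) - q *: (C * ga) in
  let E6 := q^-1 *: (B * A * C) + q ^+ 2 *: (A ^+ 2) + q ^- 2 *: (B ^+ 2)
            + q ^- 2 *: (C ^+ 2) - q *: (A * al) - q^-1 *: (B * be) - q^-1 *: (C * ga) in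
  [/\ E1 = E2, E2 = E3, E3 = E4, E4 = E5 & E5 = E6].
Proof.
move=> q_neq0 q4_neq1 [comm_alpha [_ comm_gamma]]; cbv zeta.
rewrite -!(exprVn q 2) !AWsumE !(AWsum_flipA q_neq0 q4_neq1).
rewrite !(AWsum_flipB q_neq0 q4_neq1) !(AWsum_flipC q_neq0 q4_neq1).
have rotABC := qcomm_lead_rotate (AWcen_comm_qcomm q_neq0 q4_neq1 (comm_gamma C)).
have rotBCA := qcomm_lead_rotate (AWcen_comm_qcomm q_neq0 q4_neq1 (comm_alpha A)).
split; congr AWsum.
- exact: rotABC.
- exact: rotBCA.
- by rewrite addrAC qcomm_lead_reverse.
- by rewrite addrAC !qcomm_lead_reverse -rotBCA rotABC.
- by rewrite !qcomm_lead_reverse.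
Qed.
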